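(* Let $\mathsf A$ be an MDCS instance and let $\mathsf A'=\mathsf A\backslash E_e$ be obtained by deleting encoder $E_e$, with encoder set $\mathcal E'=\mathcal E\setminus\{E_e\}$. Writing $\mathrm{Proj}'$ for projection onto the coordinates $(H(X_k))_{k\in[[K]]}$ and $(R_i)_{i\in\mathcal E'}$, $$\mathcal R(\mathsf A')=\mathrm{Proj}'\big(\mathcal R(\mathsf A)\cap\{R_e=0\}\big),\quad \mathcal R_q(\mathsf A')=\mathrm{Proj}'\big(\mathcal R_q(\mathsf A)\cap\{R_e=0\}\big),$$ $$\mathcal R_{s,q}(\mathsf A')=\mathrm{Proj}'\big(\mathcal R_{s,q}(\mathsf A)\cap\{R_e=0\}\big),\quad \mathcal R_{sp}(\mathsf A')=\mathrm{Proj}'\big(\mathcal R_{sp}(\mathsf A)\cap\{R_e=0\}\big).$$ (Equivalently, the paper imposes $H(U_e)=0$, i.e. $h_{U_e}=0$, before projecting.)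
   Context: An MDCS instance $\mathsf{A}=(\mathbf X_{[[K]]},\mathcal E,\mathcal D,\mathbf L,\mathcal G)$ consists of $K$ mutually independent sources $X_1,\dots,X_K$, a finite set $\mathcal E$ of encoders $E_e$ (each has access to all sources and outputs a message $U_e$), a finite set $\mathcal D$ of decoders $D_d$, a level $\mathrm{Lev}(D_d)\in\{1,\dots,K\}$ for each decoder, and an edge set $\mathcal G\subseteq\mathcal E\times\mathcal D$; $\mathrm{Fan}(D_d)=\{E_e:(E_e,D_d)\in\mathcal G\}$, $\mathrm{Fan}(E_e)=\{D_d:(E_e,D_d)\in\mathcal G\}$; $D_d$ must recover $X_1,\dots,X_{\mathrm{Lev}(D_d)}$ from $U_e$, $E_e\in\mathrm{Fan}(D_d)$. Encoder deletion $\mathsf A\backslash E_e$: $\mathcal E'=\mathcal E\setminus\{E_e\}$; $\mathcal D'=\mathcal D\setminus\{D_j:\exists D_i\in\mathrm{Fan}(E_e)\setminus\{D_j\},\ \mathrm{Fan}(D_i)\setminus\{E_e\}\subseteq\mathrm{Fan}(D_j),\ \mathrm{Lev}(D_j)\le\mathrm{Lev}(D_i)\}$; levels of surviving decoders unchanged; edges restricted to $\mathcal E'\times\mathcal D'$ (a surviving decoder keeps its decoding requirement with access to its remaining encoders; if a decoder's fan becomes empty, the sources it demanded are removed as well). Rate regions: let $N=K+|\mathcal E|$ with random variables $Y_1,\dots,Y_K,U_e$ ($e\in\mathcal E$); $\mathbf h\in\mathbb R^{2^N-1}$ indexed by nonempty subsets of them; $h_{\mathcal A|\mathcal B}=h_{\mathcal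 A\cup\mathcal B}-h_{\mathcal B}$. $\mathcal L_1=\{\mathbf h\ge0:h_{Y_1\cdots Y_K}=\sum_kh_{Y_k}\}$, $\mathcal L_2=\{\mathbf h\ge0:h_{U_e|Y_1\cdots Y_K}=0\ \forall e\}$, $\mathcal L_5=\{\mathbf h\ge0:h_{Y_1\cdots Y_{\mathrm{Lev}(D_d)}|(U_e)_{E_e\in\mathrm{Fan}(D_d)}}=0\ \forall d\}$, $\mathcal L_{125}=\mathcal L_1\cap\mathcal L_2\cap\mathcal L_5$, $\mathcal L_4''=\{(\mathbf h,\mathbf R)\in\mathbb R^{2^N-1}_{\ge0}\times\mathbb R^{|\mathcal E|}_{\ge0}:R_e\ge h_{U_e}\ \forall e\}$. All regions live in coordinates $((H(X_k))_k,(R_e)_e)$, where $H(X_k)$ denotes the coordinate $h_{Y_k}$; $\mathrm{Proj}$ is coordinate projection onto these. $\Gamma^*_N$ is the set of entropic vectors, $\overline{\mathrm{con}}$ the closure of the conic hull. $\Gamma_N^q$: conic hull of rank functions $\mathcal A\mapsto\mathrm{rank}(\mathbb A_{:,\mathcal A})$ of matrices $\mathbb A$ over $\mathbb F_q$ with $N$ columns. $\Gamma^q_{N,\infty}$: conic hull of vectors $\mathcal A\mapsto\dim\sum_{i\in\mathcal A}V_i$ for subspaces $V_1,\dots,V_N$ of a finite-dimensional $\mathbb F_q$-vector space. Then $\mathcal R(\mathsf A)=\mathrm{Proj}(\overline{\mathrm{con}}(\Gamma^*_N\cap\mathcal L_1\cap\mathcal L_2)\cap\mathcal L_5\cap\mathcal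 L_4'')$ (the rate region: achievable source-entropy/encoder-rate tuples); $\mathcal R_q(\mathsf A)=\mathrm{Proj}(\Gamma^q_{N,\infty}\cap\mathcal L_{125}\cap\mathcal L_4'')$ (achievable by vector $\mathbb F_q$-linear codes); $\mathcal R_{s,q}(\mathsf A)=\mathrm{Proj}(\Gamma^q_N\cap\mathcal L_{125}\cap\mathcal L_4'')$ (achievable by scalar $\mathbb F_q$-linear codes); $\mathcal R_{sp}(\mathsf A)=\mathrm{Proj}_{(R_e),(H(X_k))}\{(R_e,H(X_k),R_e^{X_k})_{e,k}\ge0: R_e=\sum_{i=1}^KR_e^{X_i}\ \forall e;\ \sum_{e:E_e\in\mathrm{Fan}(D_d)}R_e^{X_i}\ge H(X_i)\ \forall d\in\mathcal D,\ i\le\mathrm{Lev}(D_d)\}$ (superposition coding region). *)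

From HB Require Import structures.
From mathcomp Require Import all_boot all_order all_algebra all_field.
From Stdlib Require Import Reals.
Set Implicit Arguments. Unset Strict Implicit. Unset Printing Implicit Defensive.

Local Open Scope R_scope.

Definition rsum (T : finType) (P : pred T) (f : T -> R) : R :=
  \big[Rplus/R0]_(x | P x) f x.

(* ---------- vectors indexed by subsets of the N random variables ----------
   A vector of R^(2^N-1) (indexed by nonempty subsets) is represented as a
   function on all subsets; every generator used below has value 0 on the
   empty set, so the extra coordinate is always 0. *)
Definition svec (V : finType) := {set V} -> R.

Definition cone (V : finType) (S : svec V -> Prop) (h : svec V) : Prop :=
  exists (n : nat) (c : 'I_n -> R) (g : 'I_n -> svec V),
    (forall i, 0 <= c i) /\ (forall i, S (g i)) /\
    (forall A, h A = rsum predT (fun i => c i * g i A)).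

Definition closure (V : finType) (S : svec V -> Prop) (h : svec V) : Prop :=
  forall eps, 0 < eps ->
    exists h', S h' /\ forall A, Rabs (h A - h' A) < eps.

Definition log2 (x : R) : R := ln x / ln 2.

(* Shannon entropy (bits) of a pmf q on a finite set (0 log 0 = 0 since 0*_=0) *)
Definition entropy (T : finType) (q : T -> R) : R :=
  - rsum predT (fun t => q t * log2 (q t)).

(* the value of the subfamily X_A of an outcome x of (X_v)_v *)
Definition restr (V : finType) (m : nat) (A : {set V}) (x : {ffun V -> 'I_m})
  : {ffun V -> option 'I_m} :=
  [ffun v => if v \in A then Some (x v) else None].

Definition marg (V : finType) (m : nat) (p : {ffun V -> 'I_m} -> R)
  (A : {set V}) (a : {ffun V -> option 'I_m}) : R :=
  rsum (fun x => restr A x == a) p.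

(* entropic vectors Gamma*_N: h_A = H(X_A) for finite-alphabet random
   variables (X_v)_{v in V} (a common finite alphabet 'I_m is used w.l.o.g.) *)
Definition entropic (V : finType) (h : svec V) : Prop :=
  exists (m : nat) (p : {ffun V -> 'I_m} -> R),
    (forall x, 0 <= p x) /\ rsum predT p = 1 /\
    (forall A, h A = entropy (marg p A)).

(* Gamma^q_N generators: A |-> rank of the columns of a matrix indexed by A *)
Definition col_rank_vec (F : fieldType) (V : finType) (r : nat)
  (M : 'M[F]_(r, #|V|)) : svec V :=
  fun A => INR (\rank (colsub (fun j : 'I_#|A| => enum_rank (enum_val j)) M)).

Definition scalar_rank_vec (F : fieldType) (V : finType) (h : svec V) : Prop :=
  exists (r : nat) (M : 'M[F]_(r, #|V|)), h = col_rank_vec M.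

(* Gamma^q_{N,infty} generators: A |-> dim sum_{v in A} V_v, subspaces of F^d
   (a subspace of F^d is represented as the row space of a d x d matrix) *)
Definition subspace_rank_vec (F : fieldType) (V : finType) (h : svec V) : Prop :=
  exists (d : nat) (W : V -> 'M[F]_d),
    forall A, h A = INR (\rank (\sum_(v in A) W v)%MS).

Definition Gamma_q (F : fieldType) (V : finType) := cone (@scalar_rank_vec F V).
Definition Gamma_q_inf (F : fieldType) (V : finType) := cone (@subspace_rank_vec F V).

Record mdcs := MDCS {
  nsrc : nat;
  Enc : finType;
  Dec : finType;
  lev : Dec -> nat;
  edge : Enc -> Dec -> bool
}.

(* Lev(D) in {1,...,K}; distinct decoders are distinct (they differ in their
   fan or their level) -- the decoders form a *set* of (fan, level) data. *)
Definition mdcs_wf (A : mdcs) : Prop :=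
  (forall d : Dec A, is_true (leq 1 (lev d) && leq (lev d) (nsrc A))) /\
  (forall d1 d2 : Dec A, (forall x, edge x d1 = edge x d2) ->
      lev d1 = lev d2 -> d1 = d2).

Definition fanD (A : mdcs) (d : Dec A) : {set Enc A} := [set x | edge x d].

(* random variables Y_1..Y_K, U_e *)
Definition rv (A : mdcs) : finType := ('I_(nsrc A) + Enc A)%type.

Definition Yset (A : mdcs) (l : nat) : {set rv A} :=
  [set v : rv A | if v is inl k then ltn k l else false].
Definition Yall (A : mdcs) : {set rv A} := Yset A (nsrc A).
Definition Uset (A : mdcs) (S : {set Enc A}) : {set rv A} := inr @: S.

Definition cond (V : finType) (h : svec V) (X Y : {set V}) : R := h (X :|: Y) - h Y.

Definition nonneg (V : finType) (h : svec V) : Prop := forall X, 0 <= h X.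

Definition L1 (A : mdcs) (h : svec (rv A)) : Prop :=
  nonneg h /\ h (Yall A) = rsum predT (fun k => h [set inl k]).

Definition L2 (A : mdcs) (h : svec (rv A)) : Prop :=
  nonneg h /\ forall e : Enc A, cond h [set inr e] (Yall A) = 0.

Definition L5 (A : mdcs) (h : svec (rv A)) : Prop :=
  nonneg h /\ forall d : Dec A, cond h (Yset A (lev d)) (Uset (fanD d)) = 0.

Definition L125 (A : mdcs) (h : svec (rv A)) : Prop := L1 h /\ L2 h /\ L5 h.

Definition L4 (A : mdcs) (h : svec (rv A)) (Rt : Enc A -> R) : Prop :=
  nonneg h /\ (forall e, 0 <= Rt e) /\ (forall e, h [set inr e] <= Rt e).

(* regions: predicates on points ((H(X_k))_k, (R_e)_e) *)
Definition region (A : mdcs) := ('I_(nsrc A) -> R) -> (Enc A -> R) -> Prop.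

Definition proj_region (A : mdcs) (S : svec (rv A) -> Prop) : region A :=
  fun H Rt => exists h, S h /\ L4 h Rt /\ forall k, H k = h [set inl k].

Definition rate_region (A : mdcs) : region A :=
  proj_region (fun h => closure (cone (fun g => entropic g /\ L1 g /\ L2 g)) h
                        /\ L5 h).

Definition rate_region_q (F : fieldType) (A : mdcs) : region A :=
  proj_region (fun h => Gamma_q_inf F h /\ L125 h).

Definition rate_region_sq (F : fieldType) (A : mdcs) : region A :=
  proj_region (fun h => Gamma_q F h /\ L125 h).

Definition rate_region_sp (A : mdcs) : region A :=
  fun H Rt => exists r : Enc A -> 'I_(nsrc A) -> R,
    (forall e, 0 <= Rt e) /\ (forall k, 0 <= H k) /\ (forall e k, 0 <= r e k) /\
    (forall e, Rt e = rsum predT (r e)) /\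
    (forall (d : Dec A) (k : 'I_(nsrc A)), is_true (ltn k (lev d)) ->
        rsum (fun x => x \in fanD d) (fun x => r x k) >= H k).

Definition dec_removed (A : mdcs) (e : Enc A) (dj : Dec A) : bool :=
  [exists di : Dec A, [&& edge e di, di != dj,
     fanD di :\ e \subset fanD dj & leq (lev dj) (lev di)]].

Definition del_enc (A : mdcs) (e : Enc A) : mdcs :=
  @MDCS (nsrc A) {x : Enc A | x != e} {d : Dec A | ~~ dec_removed e d}
    (fun d => lev (val d)) (fun x d => edge (val x) (val d)).

Definition proj_del (A : mdcs) (e : Enc A) (S : region A) : region (del_enc e) :=
  fun H Rt' => exists Rt : Enc A -> R,
    S H Rt /\ Rt e = 0 /\ forall x : Enc (del_enc e), Rt' x = Rt (val x).

Definition region_eq (A : mdcs) (S1 S2 : region A) : Prop :=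
  forall H Rt, S1 H Rt <-> S2 H Rt.

Arguments rate_region A _ _ : clear implicits.
Arguments rate_region_q F A _ _ : clear implicits.
Arguments rate_region_sq F A _ _ : clear implicits.
Arguments rate_region_sp A _ _ : clear implicits.
Arguments proj_del {A} e S _ _.
Arguments del_enc {A} e.

(* Deleting E_e relates the random variables of A \ E_e and of A by two set maps:
   restriction forgets U_e, and extension adds U_e as a constant (a zero subspace, a zero
   column).  Entropic, subspace-rank and column-rank vectors, their cones and the closure
   of the entropic cone are stable under both maps, and so are the constraints L1, L2, L4.
   For L5, a surviving decoder only loses U_e from its fan, which is harmless when
   h(U_e) = 0 because all vectors involved are polymatroids (for entropic vectors these are
   Shannon's inequalities, which follow from ln t <= t - 1).  A removed decoder is dominated
   by a surviving decoder of at least its level whose fan lies in its own, so its decoding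
   constraint follows by monotonicity of conditional entropy; the same domination handles
   the superposition region. *)

From Pilot Require Import Defs.
From HB Require Import structures.
From mathcomp Require Import all_boot all_order all_algebra all_field zify.
From Stdlib Require Import Reals Lra FunctionalExtensionality.
Set Implicit Arguments. Unset Strict Implicit. Unset Printing Implicit Defensive.

HB.instance Definition _ := Monoid.isComLaw.Build R 0%R Rplus
  (fun a b c => esym (Rplus_assoc a b c)) Rplus_comm Rplus_0_l.

Local Open Scope R_scope.

Section RealSums.
Variable T : finType.
Implicit Types (P Q : pred T) (f g : T -> R).

Lemma ler_rsum P f g : (forall x, P x -> f x <= g x) -> rsum P f <= rsum P g.
Proof.
move=> fg; apply: (big_rec2 (fun a b => a <= b)) => [|i a b /fg]; lra.
Qed.

Lemma rsum_ge0 P f : (forall x, P x -> 0 <= f x) -> 0 <= rsum P f.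
Proof. by move=> f0; apply: (big_rec (fun a => 0 <= a)) => [|i a /f0]; lra. Qed.

Lemma rsum_mkcond P f : rsum P f = rsum predT (fun x => if P x then f x else 0).
Proof. exact: big_mkcond. Qed.

Lemma eq_rsumr P f g : (forall x, P x -> f x = g x) -> rsum P f = rsum P g.
Proof. exact: eq_bigr. Qed.

Lemma eq_rsuml P Q f : P =1 Q -> rsum P f = rsum Q f.
Proof. exact: eq_bigl. Qed.

Lemma rsum0 P : rsum P (fun _ => 0) = 0.
Proof. exact: big1. Qed.

Lemma rsumD P f g : rsum P (fun x => f x + g x) = rsum P f + rsum P g.
Proof. exact: big_split. Qed.

Lemma rsumB P f g : rsum P (fun x => f x - g x) = rsum P f - rsum P g.
Proof. by apply: (big_rec3 (fun u v w => u = v - w)) => [|i u v w _ ->]; lra. Qed.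

Lemma rsumMl P f a : rsum P (fun x => a * f x) = a * rsum P f.
Proof. by apply: (big_rec2 (fun u v => u = a * v)) => [|i u v _ ->]; lra. Qed.

Lemma rsumMr P f a : rsum P (fun x => f x * a) = rsum P f * a.
Proof. by apply: (big_rec2 (fun u v => u = v * a)) => [|i u v _ ->]; lra. Qed.

Lemma rsum_pred1 f x : rsum (fun y => y == x) f = f x.
Proof. exact: big_pred1_eq. Qed.

Lemma exchange_rsum (U : finType) P (Q : pred U) (F : T -> U -> R) :
  rsum P (fun x => rsum Q (F x)) = rsum Q (fun y => rsum P (fun x => F x y)).
Proof. exact: exchange_big. Qed.

Lemma partition_rsum (U : finType) (h : T -> U) f :
  rsum predT f = rsum predT (fun u => rsum (fun x => h x == u) f).
Proof. exact: partition_big. Qed.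

Lemma ler_rsum_subpred P Q f :
  (forall x, 0 <= f x) -> (forall x, P x -> Q x) -> rsum P f <= rsum Q f.
Proof.
move=> f0 PQ; rewrite (rsum_mkcond P) (rsum_mkcond Q); apply: ler_rsum => x _.
by case Px: (P x); [rewrite (PQ x Px); lra | case: (Q x); [exact: f0 | lra]].
Qed.

Lemma ler_rsum_term P f x : (forall y, 0 <= f y) -> P x -> f x <= rsum P f.
Proof.
move=> f0 Px; rewrite -(rsum_pred1 f x).
by apply: ler_rsum_subpred => // y /eqP ->.
Qed.

Lemma rsum_eq0 P f : (forall x, 0 <= f x) -> rsum P f = 0 -> forall x, P x -> f x = 0.
Proof.
move=> f0 s0 x Px; rewrite /rsum (bigD1 x Px) /= in s0.
have := f0 x; have := @rsum_ge0 (fun y => P y && (y != x)) f (fun y _ => f0 y).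
rewrite /rsum; lra.
Qed.

End RealSums.

Section Agreement.
Variables (V : finType) (m : nat).
Implicit Types (S T : {set V}) (x y z : {ffun V -> 'I_m}).

Definition agree S x y : bool := [forall v in S, x v == y v].

Lemma agree_refl S x : agree S x x.
Proof. exact/forall_inP. Qed.

Lemma agree_sym S x y : agree S x y = agree S y x.
Proof. by apply/forall_inP/forall_inP => xy v /xy; rewrite eq_sym. Qed.

Lemma agree_trans S y x z : agree S x y -> agree S y z -> agree S x z.
Proof.
by move=> /forall_inP xy /forall_inP yz; apply/forall_inP => v vS; rewrite (eqP (xy v vS)) yz.
Qed.

Lemma agree_sub S T x y : S \subset T -> agree T x y -> agree S x y.
Proof. by move=> /subsetP ST /forall_inP xy; apply/forall_inP => v /ST /xy. Qed.

Lemma agreeU S T x y : agree (S :|: T) x y = agree S x y && agree T x y.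
Proof.
apply/idP/andP => [xy|[/forall_inP xyS /forall_inP xyT]].
  by split; apply: agree_sub xy; rewrite ?subsetUl ?subsetUr.
by apply/forall_inP => v; rewrite inE => /orP[/xyS|/xyT].
Qed.

Lemma agree_trans_eq S x y z : agree S x y -> agree S x z = agree S y z.
Proof.
move=> xy; apply/idP/idP; last exact: agree_trans.
by apply: agree_trans; rewrite agree_sym.
Qed.

Lemma restr_eq S x y : (restr S y == restr S x) = agree S x y.
Proof.
apply/eqP/forall_inP => [ryx v vS | xy].
  by have := congr1 (fun f : {ffun V -> option 'I_m} => f v) ryx; rewrite !ffunE vS => -[->].
by apply/ffunP => v; rewrite !ffunE; case: ifP => // /xy /eqP ->.
Qed.

End Agreement.

Lemma ln_le x y : 0 < x -> x <= y -> ln x <= ln y.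
Proof. by move=> x0 [/(ln_increasing _ _ x0)|<-]; lra. Qed.

Lemma ln2_pos : 0 < ln 2.
Proof. by rewrite -ln_1; apply: ln_increasing; lra. Qed.

Lemma ln_le_sub1 t : 0 < t -> ln t <= t - 1.
Proof. by move=> t0; have := exp_ineq1_le (ln t); rewrite exp_ln //; lra. Qed.

Lemma Rinv_ge0 a : 0 <= a -> 0 <= / a.
Proof. by case=> [/Rinv_0_lt_compat|<-]; [lra | rewrite Rinv_0; lra]. Qed.

Lemma ler_mulVf a : 0 <= a -> a * / a <= 1.
Proof. by case=> [a0|<-]; [rewrite Rinv_r; lra | rewrite Rmult_0_l; lra]. Qed.

Section Shannon.
Variables (V : finType) (m : nat) (p : {ffun V -> 'I_m} -> R).
Hypotheses (p_ge0 : forall x, 0 <= p x) (p_sum1 : rsum predT p = 1).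
Implicit Types (S T : {set V}) (x y w : {ffun V -> 'I_m}).

Definition cell_mass S x : R := rsum (agree S x) p.

Definition negentropy S : R := rsum predT (fun x => p x * ln (cell_mass S x)).

Lemma entropy_margE S : entropy (marg p S) = - negentropy S / ln 2.
Proof.
have neg_marg : rsum predT (fun a => marg p S a * ln (marg p S a)) = negentropy S.
  rewrite /negentropy (partition_rsum (restr S)); apply: eq_rsumr => a _.
  rewrite /marg -rsumMr; apply: eq_rsumr => x /eqP <-.
  by congr (_ * ln _); apply: eq_rsuml => y; rewrite restr_eq.
rewrite /entropy -neg_marg /Rdiv.
rewrite (eq_rsumr (g := fun a => marg p S a * ln (marg p S a) * / ln 2)) //.
  by rewrite rsumMr; ring.
by move=> a _; rewrite /log2 /Rdiv; ring.
Qed.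

Lemma cell_mass_ge S x : p x <= cell_mass S x.
Proof. exact/ler_rsum_term/agree_refl. Qed.

Lemma cell_mass_gt0 S x : 0 < p x -> 0 < cell_mass S x.
Proof. by move=> px; apply: Rlt_le_trans (cell_mass_ge S x). Qed.

Lemma cell_mass_anti S T x : S \subset T -> cell_mass T x <= cell_mass S x.
Proof. by move=> ST; apply: ler_rsum_subpred => // y; apply: agree_sub. Qed.

Lemma cell_mass_agree S x y : agree S x y -> cell_mass S x = cell_mass S y.
Proof. by move=> xy; apply: eq_rsuml => z; rewrite /= (agree_trans_eq z xy). Qed.

Lemma negentropy0 : negentropy set0 = 0.
Proof.
rewrite /negentropy (eq_rsumr (g := fun _ => 0)) ?rsum0 // => x _.
have -> : cell_mass set0 x = 1.
  by rewrite -p_sum1; apply: eq_rsuml => y; apply/forall_inP => v; rewrite inE.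
by rewrite ln_1 Rmult_0_r.
Qed.

Lemma negentropy_anti S T : S \subset T -> negentropy T <= negentropy S.
Proof.
move=> ST; apply: ler_rsum => x _.
case: (p_ge0 x) => [px|<-]; last lra.
apply: Rmult_le_compat_l; first lra.
by apply: ln_le; [apply: cell_mass_gt0 | apply: cell_mass_anti].
Qed.

Lemma rsum_joint_cell_le S T y w :
  rsum (fun x => agree S y x && agree T w x) (fun x => p x * / cell_mass (S :|: T) x)
  <= (if agree (S :&: T) y w then 1 else 0).
Proof.
set C := fun x => agree S y x && agree T w x.
have cellU x : C x -> cell_mass (S :|: T) x = rsum C p.
  move=> /andP[yx wx]; apply: eq_rsuml => z.
  by rewrite /C /= agreeU (agree_trans_eq z yx) (agree_trans_eq z wx).
rewrite (eq_rsumr (g := fun x => p x * / rsum C p)); last by move=> x /cellU ->.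
rewrite rsumMr; case: ifP => [_|/negP yw]; first by apply/ler_mulVf/rsum_ge0.
rewrite (eq_rsumr (g := fun _ => 0)) ?rsum0; first lra.
move=> x /andP[yx wx]; case: yw; apply: (@agree_trans _ _ _ x).
  by apply: agree_sub yx; rewrite subsetIl.
by rewrite agree_sym; apply: agree_sub wx; rewrite subsetIr.
Qed.

(* Expanding the cell masses of [S] and [T] turns the sum into a triple sum over (x, y, w);
   the inner sum over x is then bounded by [rsum_joint_cell_le]. *)
Lemma rsum_cell_ratio_le1 S T :
  rsum predT (fun x => p x * cell_mass S x * cell_mass T x
                       * / cell_mass (S :|: T) x * / cell_mass (S :&: T) x) <= 1.
Proof.
set U := S :|: T; set I := S :&: T.
have IS : I \subset S by rewrite subsetIl.
pose G y w x := if agree S y x && agree T w x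
                then p y * p w * / cell_mass I y * (p x * / cell_mass U x) else 0.
have expandG x : p x * cell_mass S x * cell_mass T x * / cell_mass U x * / cell_mass I x
                 = rsum predT (fun y => rsum predT (fun w => G y w x)).
  set K := p x * / cell_mass U x * / cell_mass I x.
  have -> : p x * cell_mass S x * cell_mass T x * / cell_mass U x * / cell_mass I x
            = cell_mass S x * (cell_mass T x * K) by rewrite /K; ring.
  rewrite /cell_mass (rsum_mkcond (agree S x)) -rsumMr; apply: eq_rsumr => y _.
  rewrite (rsum_mkcond (agree T x)) -rsumMr -rsumMl; apply: eq_rsumr => w _.
  rewrite /G /K (agree_sym S y) (agree_sym T w).
  case: ifP => xy; case: ifP => xw //=; try ring.
  by rewrite -/(cell_mass I x) (cell_mass_agree (agree_sub IS xy)); ring.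
rewrite (eq_rsumr (fun x _ => expandG x)) exchange_rsum.
rewrite (eq_rsumr (g := fun y => rsum predT (fun w => rsum predT (G y w)))); last first.
  by move=> y _; rewrite exchange_rsum.
rewrite -p_sum1; apply: ler_rsum => y _.
have pyI_ge0 : 0 <= p y * / cell_mass I y.
  by apply/Rmult_le_pos/Rinv_ge0/rsum_ge0.
apply: Rle_trans (_ : rsum (agree I y) (fun w => p y * / cell_mass I y * p w) <= _).
  rewrite (rsum_mkcond (agree I y)); apply: ler_rsum => w _.
  rewrite /G -rsum_mkcond (eq_rsumr (g := fun x => p y * p w * / cell_mass I y
                                                    * (p x * / cell_mass U x))) // rsumMl.
  have coef_ge0 : 0 <= p y * / cell_mass I y * p w by apply: Rmult_le_pos.
  have := rsum_joint_cell_le S T y w; rewrite -/U -/I.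
  set s := rsum _ (fun x => p x * _).
  by case: ifP => _ J; nra.
rewrite rsumMl -/(cell_mass I y) Rmult_assoc (Rmult_comm (/ _)).
have := ler_mulVf (rsum_ge0 (P := agree I y) (fun z _ => p_ge0 z)).
by rewrite -/(cell_mass I y); have := p_ge0 y; nra.
Qed.

Lemma negentropy_supermod S T :
  negentropy S + negentropy T <= negentropy (S :|: T) + negentropy (S :&: T).
Proof.
set U := S :|: T; set I := S :&: T.
pose ratio x := cell_mass S x * cell_mass T x * / cell_mass U x * / cell_mass I x.
suff : negentropy S + negentropy T - negentropy U - negentropy I <= 0 by lra.
rewrite /negentropy -rsumD -!rsumB.
apply: Rle_trans (_ : rsum predT (fun x => p x * ratio x - p x) <= 0); last first.
  rewrite rsumB p_sum1 (eq_rsumr (g := fun x => p x * cell_mass S x * cell_mass T x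
                          * / cell_mass U x * / cell_mass I x)); last first.
    by move=> x _; rewrite /ratio; ring.
  by have := rsum_cell_ratio_le1 S T; rewrite -/U -/I; lra.
apply: ler_rsum => x _; case: (p_ge0 x) => [px|<-]; last by rewrite !Rmult_0_l; lra.
have qS := cell_mass_gt0 S px; have qT := cell_mass_gt0 T px.
have qU := cell_mass_gt0 U px; have qI := cell_mass_gt0 I px.
have ratio_gt0 : 0 < ratio x.
  by rewrite /ratio; repeat (apply: Rmult_lt_0_compat || apply: Rinv_0_lt_compat).
have ln_ratio : ln (ratio x) = ln (cell_mass S x) + ln (cell_mass T x)
                               - ln (cell_mass U x) - ln (cell_mass I x).
  rewrite /ratio !ln_mult ?ln_Rinv //;
  by repeat (apply: Rmult_lt_0_compat || apply: Rinv_0_lt_compat).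
have := ln_le_sub1 ratio_gt0; rewrite ln_ratio; nra.
Qed.

End Shannon.

Definition polymatroid (V : finType) (h : svec V) : Prop :=
  [/\ h set0 = 0, forall S T : {set V}, S \subset T -> h S <= h T
    & forall S T : {set V}, h (S :|: T) + h (S :&: T) <= h S + h T].

Lemma entropic_polymatroid (V : finType) (h : svec V) : entropic h -> polymatroid h.
Proof.
case=> m [p [p_ge0 [p_sum1 hE]]]; have l2 := Rinv_0_lt_compat _ ln2_pos.
split=> [|S T ST|S T]; rewrite !hE !entropy_margE /Rdiv.
- by rewrite negentropy0; lra.
- by have := negentropy_anti p_ge0 ST; nra.
- by have := negentropy_supermod p_ge0 p_sum1 S T; nra.
Qed.

Section PolymatroidFacts.
Variables (V : finType) (h : svec V).
Hypothesis hP : polymatroid h.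
Implicit Types (S T X Z : {set V}).

Lemma cond_ge0 X Z : 0 <= cond h X Z.
Proof. by case: hP => _ hmono _; have := hmono _ _ (subsetUr X Z); rewrite /cond; lra. Qed.

Lemma cond_mono X Z X' Z' : X \subset X' -> Z' \subset Z -> cond h X Z <= cond h X' Z'.
Proof.
case: hP => _ hmono hsub XX' Z'Z; rewrite /cond.
have := hmono _ _ (setSU Z XX'); have := hsub (X' :|: Z') Z.
rewrite -setUA (setUidPr Z'Z).
have : h Z' <= h ((X' :|: Z') :&: Z) by apply: hmono; rewrite subsetI subsetUr.
lra.
Qed.

Lemma polymatroid_setD1_null X v : h [set v] = 0 -> h (X :\ v) = h X.
Proof.
case: hP => h0 hmono hsub hv; apply: Rle_antisym; first exact/hmono/subD1set.
have := hsub (X :\ v) [set v].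
have -> : (X :\ v) :&: [set v] = set0.
  by apply/setP => u; rewrite !inE; case: (u == v); rewrite ?andbF.
have : h X <= h ((X :\ v) :|: [set v]).
  by apply/hmono/subsetP => u; rewrite !inE; case: (u == v) => // ->.
lra.
Qed.

End PolymatroidFacts.

Lemma cone_polymatroid (V : finType) (G : svec V -> Prop) (h : svec V) :
  (forall g, G g -> polymatroid g) -> cone G h -> polymatroid h.
Proof.
move=> GP [n [c [g [c_ge0 [Gg hE]]]]]; split=> [|S T ST|S T]; rewrite !hE.
- rewrite (eq_rsumr (g := fun _ => 0)) ?rsum0 // => i _.
  by case: (GP _ (Gg i)) => -> _ _; lra.
- apply: ler_rsum => i _; apply: Rmult_le_compat_l => //.
  by case: (GP _ (Gg i)) => _ + _; apply.
- rewrite -!rsumD; apply: ler_rsum => i _.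
  by case: (GP _ (Gg i)) => _ _ /(_ S T); have := c_ge0 i; nra.
Qed.

Lemma le_eps a b : (forall eps, 0 < eps -> a <= b + eps) -> a <= b.
Proof. by move=> le_ab; apply: Rnot_lt_le => ba; have := le_ab ((a - b) / 2); lra. Qed.

Lemma closure_polymatroid (V : finType) (G : svec V -> Prop) (h : svec V) :
  (forall g, G g -> polymatroid g) -> Defs.closure G h -> polymatroid h.
Proof.
move=> GP hcl; split=> [|S T ST|S T].
- apply: Rle_antisym; apply: le_eps => eps eps0; have [g [/GP[g0 _ _] close]] := hcl eps eps0;
  by have /Rabs_def2 := close set0; rewrite g0; lra.
- apply: le_eps => eps eps0; have [g [/GP[_ gmono _] close]] := hcl (eps / 2) ltac:(lra).
  have /Rabs_def2 := close S; have /Rabs_def2 := close T; have := gmono S T ST; lra.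
- apply: le_eps => eps eps0; have [g [/GP[_ _ gsub] close]] := hcl (eps / 4) ltac:(lra).
  have /Rabs_def2 := close S; have /Rabs_def2 := close T.
  have /Rabs_def2 := close (S :|: T); have /Rabs_def2 := close (S :&: T).
  have := gsub S T; lra.
Qed.

Lemma cone_comp (V W : finType) (G : svec V -> Prop) (G' : svec W -> Prop)
  (f : {set W} -> {set V}) (h : svec V) :
  (forall g, G g -> G' (fun S => g (f S))) -> cone G h -> cone G' (fun S => h (f S)).
Proof.
move=> GG' [n [c [g [c_ge0 [Gg hE]]]]].
by exists n, c, (fun i S => g i (f S)); split; [|split=> // i; apply: GG'].
Qed.

Lemma closure_comp (V W : finType) (G : svec V -> Prop) (G' : svec W -> Prop)
  (f : {set W} -> {set V}) (h : svec V) :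
  (forall g, G g -> G' (fun S => g (f S))) ->
  Defs.closure G h -> Defs.closure G' (fun S => h (f S)).
Proof.
move=> GG' hcl eps eps0; have [g [Gg close]] := hcl eps eps0.
by exists (fun S => g (f S)); split=> [|S]; [apply: GG' | apply: close].
Qed.

Section RankVectors.
Variable F : fieldType.
Local Open Scope ring_scope.

Lemma mxrank_sum_eq d (I J : finType) (P : pred I) (Q : pred J)
    (X : I -> 'M[F]_d) (Y : J -> 'M[F]_d) :
  (forall i, P i -> (X i <= \sum_(j | Q j) Y j)%MS) ->
  (forall j, Q j -> (Y j <= \sum_(i | P i) X i)%MS) ->
  \rank (\sum_(i | P i) X i)%MS = \rank (\sum_(j | Q j) Y j)%MS.
Proof. by move=> XY YX; apply/eqP; rewrite eqn_leq !mxrankS //; apply/sumsmx_subP. Qed.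

Lemma subspace_rank_polymatroid (V : finType) (h : svec V) :
  subspace_rank_vec F h -> polymatroid h.
Proof.
case=> d [W hE]; have sumW S v : v \in S -> (W v <= \sum_(u in S) W u)%MS.
  by move=> vS; apply: (sumsmx_sup v).
split=> [|S T ST|S T]; rewrite !hE.
- by rewrite big_pred0 ?mxrank0 // => v; rewrite inE.
- apply/le_INR/leP/mxrankS/sumsmx_subP => v vS.
  exact/sumW/(subsetP ST).
- rewrite -!plus_INR; apply/le_INR/leP.
  rewrite !plusE -(mxrank_sum_cap (\sum_(v in S) W v)%MS (\sum_(v in T) W v)%MS).
  apply: leq_add; apply: mxrankS.
    apply/sumsmx_subP => v; rewrite inE => /orP[/sumW vS|/sumW vT].
      exact: submx_trans vS (addsmxSl _ _).
    exact: submx_trans vT (addsmxSr _ _).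
  rewrite sub_capmx; apply/andP; split; apply/sumsmx_subP => v;
    by rewrite inE => /andP[vS vT]; apply: sumW.
Qed.

Lemma col_rank_vecE (V : finType) r (M : 'M[F]_(r, #|V|)) (S : {set V}) :
  col_rank_vec M S = INR (\rank (\sum_(v in S) <<row (enum_rank v) M^T>>)%MS).
Proof.
rewrite /col_rank_vec -mxrank_tr; congr INR.
set N := (colsub _ M)^T.
apply/eqP; rewrite eqn_leq !mxrankS //.
  apply/sumsmx_subP => v vS; rewrite genmxE.
  have := enum_rankK_in vS vS; set j := enum_rank_in vS v => Ej.
  have -> : row (enum_rank v) M^T = row j N by apply/rowP => k; rewrite !mxE Ej.
  exact: row_sub.
apply/row_subP => j.
have -> : row j N = row (enum_rank (enum_val j)) M^T by apply/rowP => k; rewrite !mxE.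
by apply: (sumsmx_sup (enum_val j)); [exact: enum_valP | rewrite genmxE].
Qed.

Lemma scalar_rank_subspace_rank (V : finType) (h : svec V) :
  scalar_rank_vec F h -> subspace_rank_vec F h.
Proof.
case=> r [M ->]; exists r, (fun v => <<row (enum_rank v) M^T>>%MS) => S.
exact: col_rank_vecE.
Qed.

End RankVectors.

Lemma rsum_pushforward (X Y : finType) (p : X -> R) (f : X -> Y) (G : Y -> R) :
  rsum predT (fun y => rsum (fun x => f x == y) p * G y) = rsum predT (fun x => p x * G (f x)).
Proof.
rewrite (partition_rsum f (fun x => p x * G (f x))); apply: eq_rsumr => y _.
by rewrite -rsumMr; apply: eq_rsumr => x /eqP ->.
Qed.

Lemma entropic_comp (V W : finType) m m' (p : {ffun V -> 'I_m} -> R)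
    (f : {ffun V -> 'I_m} -> {ffun W -> 'I_m'}) (s : {set W} -> {set V}) :
  (forall x, 0 <= p x) -> rsum predT p = 1 ->
  (forall S x y, agree S (f x) (f y) = agree (s S) x y) ->
  entropic (fun S => entropy (marg p (s S))).
Proof.
move=> p_ge0 p_sum1 agree_f.
pose q y := rsum (fun x => f x == y) p.
exists m', q; split; [by move=> y; apply: rsum_ge0 | split=> [|S]].
  by rewrite -p_sum1 (partition_rsum f p).
rewrite !entropy_margE /negentropy rsum_pushforward; congr (- _ / _).
apply: eq_rsumr => x _; congr (_ * ln _).
rewrite /cell_mass (rsum_mkcond (agree S (f x))).
rewrite (eq_rsumr (g := fun y => q y * (if agree S (f x) y then 1 else 0))); last first.
  by move=> y _; case: ifP => _; ring.
rewrite rsum_pushforward (rsum_mkcond (agree (s S) x)); apply: eq_rsumr => z _.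
by rewrite agree_f; case: ifP => _; ring.
Qed.

(* Composing a vector on [V] with [setmap o] gives the vector of the family
   [w |-> X_(o w)], where [X_None] is a constant. *)
Definition setmap (W V : finType) (o : W -> option V) (S : {set W}) : {set V} :=
  [set v | [exists w in S, o w == Some v]].

Lemma mem_setmap (W V : finType) (o : W -> option V) (S : {set W}) v :
  (v \in setmap o S) = [exists w in S, o w == Some v].
Proof. by rewrite inE. Qed.

Section SetmapClosure.
Variables (W V : finType) (o : W -> option V).

Lemma entropic_setmap (g : svec V) : entropic g -> entropic (fun S => g (setmap o S)).
Proof.
case=> m [p [p_ge0 [p_sum1 gE]]].
pose f (x : {ffun V -> 'I_m}) : {ffun W -> 'I_m.+1} :=
  [ffun w => if o w is Some v then widen_ord (leqnSn m) (x v) else ord0].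
have -> : (fun S => g (setmap o S)) = (fun S => entropy (marg p (setmap o S))).
  by apply: functional_extensionality => S; rewrite gE.
apply: (entropic_comp (f := f)) => // S x y.
apply/forall_inP/forall_inP => [xy v | xy w wS].
  by rewrite mem_setmap => /exists_inP[w wS /eqP ow]; have := xy w wS; rewrite !ffunE ow.
rewrite !ffunE; case ow: (o w) => [v|] //.
by rewrite (eqP (xy v _)) // mem_setmap; apply/exists_inP; exists w; rewrite ?ow.
Qed.

Variable F : fieldType.
Local Open Scope ring_scope.

Lemma mxrank_sum_setmap d (X : V -> 'M[F]_d) (Y : W -> 'M[F]_d) :
  (forall w, Y w = if o w is Some v then X v else 0) -> forall S : {set W},
  \rank (\sum_(w in S) Y w)%MS = \rank (\sum_(v in setmap o S) X v)%MS.
Proof.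
move=> YE S; apply: mxrank_sum_eq => [w wS|v].
  rewrite YE; case ow: (o w) => [v|]; last exact: sub0mx.
  by apply: (sumsmx_sup v); rewrite // mem_setmap; apply/exists_inP; exists w; rewrite ?ow.
rewrite mem_setmap => /exists_inP[w wS /eqP ow].
by apply: (sumsmx_sup w) => //; rewrite YE ow.
Qed.

Lemma subspace_rank_setmap (g : svec V) :
  subspace_rank_vec F g -> subspace_rank_vec F (fun S => g (setmap o S)).
Proof.
case=> d [X gE]; exists d, (fun w => if o w is Some v then X v else 0) => S.
by rewrite gE (mxrank_sum_setmap (X := X)).
Qed.

Lemma scalar_rank_setmap (g : svec V) :
  scalar_rank_vec F g -> scalar_rank_vec F (fun S => g (setmap o S)).
Proof.
case=> r [M ->].
pose M' : 'M[F]_(r, #|W|) :=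
  \matrix_(i, j) if o (enum_val j) is Some v then M i (enum_rank v) else 0.
exists r, M'; apply: functional_extensionality => S; rewrite !col_rank_vecE; congr INR.
symmetry; apply: mxrank_sum_setmap => w; rewrite /M'.
case ow: (o w) => [v|]; last rewrite -(@genmx0 F 1 r);
  by congr <<_>>%MS; apply/rowP => k; rewrite !mxE enum_rankK ow.
Qed.

End SetmapClosure.

Section EncoderDeletion.
Variables (A : mdcs) (e : Enc A).
Local Notation A' := (del_enc e).
Implicit Types (S T : {set rv A}).

Lemma val_del_neq (x' : Enc A') : val x' != e.
Proof. by case: x'. Qed.

Definition embed_var (v' : rv A') : rv A :=
  match v' with inl k => inl k | inr x' => inr (val x') end.

Definition restrict_var (v : rv A) : option (rv A') :=
  match v with inl k => Some (inl k) | inr x => omap inr (insub x) end.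

Definition embed_set : {set rv A'} -> {set rv A} := setmap (fun v' => Some (embed_var v')).
Definition restrict_set : {set rv A} -> {set rv A'} := setmap restrict_var.

Lemma restrict_varP v v' : (restrict_var v == Some v') = (v == embed_var v').
Proof.
case: v v' => [k|x] [k'|x'] //=; first by case: insub.
case: insubP => [y _ <-|nx] /=; first exact: val_eqE.
by apply/esym/eqP => -[ex]; move: nx; rewrite ex val_del_neq.
Qed.

Lemma mem_restrict_set v' S : (v' \in restrict_set S) = (embed_var v' \in S).
Proof.
rewrite mem_setmap; apply/exists_inP/idP => [[v vS]|vS].
  by rewrite restrict_varP => /eqP <-.
by exists (embed_var v'); rewrite // restrict_varP.
Qed.

Lemma embed_var_inj : injective embed_var.
Proof. by move=> [k|x] [k'|x'] //= [] // => [->|/val_inj ->]. Qed.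

Lemma embed_var_cases v : v = inr e \/ exists v', v = embed_var v'.
Proof.
case: v => [k|x]; first by right; exists (inl k).
case: (eqVneq x e) => [->|xe]; [by left | by right; exists (inr (Sub x xe))].
Qed.

Lemma embed_var_neq v' : embed_var v' != inr e.
Proof. by case: v' => [//|x']; rewrite /= inj_eq ?val_del_neq //; apply: inr_inj. Qed.

Lemma mem_embed_set v' (S' : {set rv A'}) : (embed_var v' \in embed_set S') = (v' \in S').
Proof.
rewrite mem_setmap; apply/exists_inP/idP => [[w wS]|]; last by exists v'.
by move=> /eqP[/embed_var_inj <-].
Qed.

Lemma e_notin_embed_set (S' : {set rv A'}) : inr e \notin embed_set S'.
Proof.
by rewrite mem_setmap; apply/exists_inP => -[v' _ /eqP[] /eqP]; apply/negP/embed_var_neq.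
Qed.

Lemma embed_restrict_set S : embed_set (restrict_set S) = S :\ inr e.
Proof.
apply/setP => v; case: (embed_var_cases v) => [->|[v' ->]].
  by rewrite (negbTE (e_notin_embed_set _)) !inE eqxx.
by rewrite mem_embed_set mem_restrict_set !inE embed_var_neq.
Qed.

Lemma embed_restrict_set_id S : inr e \notin S -> embed_set (restrict_set S) = S.
Proof.
by move=> eS; rewrite embed_restrict_set; apply/setDidPl; rewrite disjoint_sym disjoints1.
Qed.

Lemma restrict_setU S T : restrict_set (S :|: T) = restrict_set S :|: restrict_set T.
Proof. by apply/setP => v'; rewrite !(inE, mem_restrict_set). Qed.

Lemma restrict_Yset l : restrict_set (Yset A l) = Yset A' l.
Proof. by apply/setP => -[k|x']; rewrite mem_restrict_set !inE. Qed.

Lemma restrict_set1_inl k : restrict_set [set inl k] = [set inl k].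
Proof. by apply/setP => -[k'|x']; rewrite mem_restrict_set !inE. Qed.

Lemma restrict_set1_inr x' : restrict_set [set inr (val x')] = [set inr x'].
Proof.
by apply/setP => -[k|y]; rewrite mem_restrict_set !inE //= !(inj_eq inr_inj) val_eqE.
Qed.

Lemma restrict_set1_e : restrict_set [set inr e] = set0.
Proof. by apply/setP => v'; rewrite mem_restrict_set !inE (negbTE (embed_var_neq v')). Qed.

Lemma restrict_Uset X : restrict_set (Uset X) = Uset [set x' : Enc A' | val x' \in X].
Proof.
apply/setP => -[k|x']; rewrite mem_restrict_set /Uset.
  by apply/imsetP/imsetP => -[].
by rewrite /= !(mem_imset _ _ inr_inj) inE.
Qed.

Lemma fanD_del (d' : Dec A') : fanD d' = [set x' : Enc A' | val x' \in fanD (val d')].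
Proof. by apply/setP => x'; rewrite !inE. Qed.

End EncoderDeletion.

Section Domination.
Variables (A : mdcs) (e : Enc A).
Hypothesis wfA : mdcs_wf A.

Definition dominates (di dj : Dec A) : bool :=
  [&& edge e di, fanD di :\ e \subset fanD dj & (lev dj <= lev di)%nat].

Lemma dec_removedP dj : dec_removed e dj = [exists di, (di != dj) && dominates di dj].
Proof. by apply/existsP/existsP => -[di /and4P[? ? ? ?]]; exists di; apply/and4P. Qed.

Lemma dominates_trans dk di dj : dominates dk di -> dominates di dj -> dominates dk dj.
Proof.
case/and3P=> edk /subsetP kdi lik /and3P[_ /subsetP idj lji]; apply/and3P; split=> //.
  apply/subsetP => x /[dup] /setD1P[xe _] /kdi xi.
  by apply: idj; rewrite !inE xe; rewrite inE in xi.
exact: leq_trans lji lik.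
Qed.

(* Lexicographic in (fan size, decreasing level); by [mdcs_wf] a distinct dominator has
   strictly smaller rank, so a dominator of minimal rank is never removed. *)
Definition dec_rank (d : Dec A) : nat :=
  (#|fanD d| * (nsrc A).+1 + (nsrc A - lev d))%nat.

Lemma dominates_rank_lt dk di :
  edge e di -> dk != di -> dominates dk di -> (dec_rank dk < dec_rank di)%nat.
Proof.
move=> edi neq /and3P[_ /subsetP sub_ki le_ik].
have sub : fanD dk \subset fanD di.
  apply/subsetP => x xk; case: (eqVneq x e) => [->|xe]; first by rewrite inE.
  by apply: sub_ki; rewrite !inE xe; rewrite inE in xk.
have [/andP[_ lk] /andP[_ li]] := (wfA.1 dk, wfA.1 di).
rewrite /dec_rank; case: (ltnP #|fanD dk| #|fanD di|) => [lt_card|ge_card]; first nia.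
have fan_eq : fanD dk = fanD di by apply/eqP; rewrite eqEcard sub ge_card.
have lev_neq : lev dk != lev di.
  apply: contra neq => /eqP lev_eq; apply/eqP/(wfA.2 _ _ _ lev_eq) => x.
  by move/setP/(_ x): fan_eq; rewrite !inE.
rewrite fan_eq; lia.
Qed.

Lemma removed_dec_dominated dj : dec_removed e dj ->
  exists di, ~~ dec_removed e di /\ dominates di dj.
Proof.
rewrite dec_removedP => /existsP[d0 /andP[_ d0j]].
have [di dij min_di] := @arg_minnP _ d0 (dominates^~ dj) dec_rank d0j.
exists di; split; last exact: dij.
rewrite dec_removedP; apply/existsP => -[dk /andP[ki dki]].
have /min_di := dominates_trans dki dij.
by rewrite leqNgt (dominates_rank_lt _ ki dki) //; case/and3P: dij.
Qed.

End Domination.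

Section ConstraintTransfer.
Variables (A : mdcs) (e : Enc A).
Hypothesis wfA : mdcs_wf A.
Local Notation A' := (del_enc e).
Local Notation embed := (@embed_set A e).
Local Notation restrict := (@restrict_set A e).

Lemma dec_del_dominated (d : Dec A) : exists d' : Dec A',
  (lev d <= lev d')%nat /\ forall x' : Enc A', x' \in fanD d' -> val x' \in fanD d.
Proof.
case rem: (dec_removed e d).
  have [di [kept /and3P[_ /subsetP sub le_di]]] := removed_dec_dominated wfA rem.
  exists (exist _ di kept); split=> [//|x']; rewrite inE => x'di.
  by apply: sub; rewrite !inE val_del_neq.
by exists (exist _ d (negbT rem)); split=> [|x']; [exact: leqnn | rewrite !inE].
Qed.

Section Embed.
Variable h : svec (rv A).

Lemma L1_embed : L1 h -> L1 (fun S => h (embed S)).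
Proof.
case=> hnn hY; split=> [S|]; first exact: hnn.
rewrite /Yall -restrict_Yset embed_restrict_set_id ?inE // hY.
by apply: eq_rsumr => k _; rewrite -(restrict_set1_inl e k) embed_restrict_set_id // inE.
Qed.

Lemma L2_embed : L2 h -> L2 (fun S => h (embed S)).
Proof.
case=> hnn hU; split=> [S|x']; first exact: hnn.
rewrite /cond /Yall -restrict_Yset -restrict_set1_inr -restrict_setU !embed_restrict_set_id.
- exact: hU.
- by rewrite inE.
- by rewrite !inE negb_or eq_sym (embed_var_neq (inr x')).
Qed.

Lemma L5_embed : polymatroid h -> h [set inr e] = 0 -> L5 h -> L5 (fun S => h (embed S)).
Proof.
move=> hP he [hnn hD]; split=> [S|d']; first exact: hnn.
rewrite /cond fanD_del -restrict_Uset -restrict_Yset -restrict_setU !embed_restrict_set.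
by rewrite !polymatroid_setD1_null //; apply: hD.
Qed.

Lemma L4_embed Rt : L4 h Rt -> L4 (fun S => h (embed S)) (fun x' => Rt (val x')).
Proof.
case=> hnn [Rt_ge0 hR]; split=> [S|]; first exact: hnn.
split=> x'; first exact: Rt_ge0.
by rewrite -restrict_set1_inr embed_restrict_set_id // inE eq_sym (embed_var_neq (inr x')).
Qed.

End Embed.

Definition extend_rates (Rt' : Enc A' -> R) (x : Enc A) : R :=
  if insub x is Some x' then Rt' x' else 0.

Lemma extend_rates_val Rt' x' : extend_rates Rt' (val x') = Rt' x'.
Proof. by rewrite /extend_rates valK. Qed.

Lemma extend_rates_e Rt' : extend_rates Rt' e = 0.
Proof. by rewrite /extend_rates insubF //= eqxx. Qed.

Lemma extend_rates_ge0 (Rt' : Enc A' -> R) x :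
  (forall x', 0 <= Rt' x') -> 0 <= extend_rates Rt' x.
Proof. by move=> Rt_ge0; rewrite /extend_rates; case: insub => [x'|]; [exact: Rt_ge0 | lra]. Qed.

Section Restrict.
Variable h : svec (rv A').

Lemma L1_restrict : L1 h -> L1 (fun S => h (restrict S)).
Proof.
case=> hnn hY; split=> [S|]; first exact: hnn.
by rewrite /Yall restrict_Yset hY; apply: eq_rsumr => k _; rewrite restrict_set1_inl.
Qed.

Lemma L2_restrict : L2 h -> L2 (fun S => h (restrict S)).
Proof.
case=> hnn hU; split=> [S|x]; first exact: hnn.
rewrite /cond /Yall restrict_setU restrict_Yset; case: (eqVneq x e) => [->|xe].
  by rewrite restrict_set1_e set0U; lra.
by rewrite -[x]/(val (Sub x xe : Enc A')) restrict_set1_inr; apply: hU.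
Qed.

Lemma L5_restrict : polymatroid h -> L5 h -> L5 (fun S => h (restrict S)).
Proof.
move=> hP [hnn hD]; split=> [S|d]; first exact: hnn.
rewrite /cond restrict_setU restrict_Yset restrict_Uset -/(cond h _ _).
have [d' [le_d' fan_d']] := dec_del_dominated d.
apply: Rle_antisym; last exact: cond_ge0.
rewrite -(hD d'); apply: (cond_mono hP).
- by apply/subsetP => -[k|x']; rewrite /Yset !inE // => /leq_trans; apply.
- by apply/imsetS/subsetP => x' /fan_d'; rewrite inE.
Qed.

Lemma L4_restrict Rt' :
  h set0 = 0 -> L4 h Rt' -> L4 (fun S => h (restrict S)) (extend_rates Rt').
Proof.
move=> h0 [hnn [Rt_ge0 hR]]; split=> [S|]; first exact: hnn.
split=> x; first exact: extend_rates_ge0.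
case: (eqVneq x e) => [->|xe]; first by rewrite restrict_set1_e h0 extend_rates_e; lra.
by rewrite -[x]/(val (Sub x xe : Enc A')) restrict_set1_inr extend_rates_val.
Qed.

End Restrict.
End ConstraintTransfer.

Lemma closure_cone_entropic_polymatroid (V : finType) (P : svec V -> Prop) (h : svec V) :
  Defs.closure (cone (fun g => entropic g /\ P g)) h -> polymatroid h.
Proof.
apply: closure_polymatroid => g; apply: cone_polymatroid => g' [Eg' _].
exact: entropic_polymatroid.
Qed.

Section RegionDeletion.
Variables (A : mdcs) (e : Enc A).
Hypothesis wfA : mdcs_wf A.
Local Notation A' := (del_enc e).
Local Notation embed := (@embed_set A e).
Local Notation restrict := (@restrict_set A e).

Lemma proj_region_del (C : svec (rv A) -> Prop) (C' : svec (rv A') -> Prop) :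
  (forall h', C' h' -> h' set0 = 0) ->
  (forall h, C h -> h [set inr e] = 0 -> C' (fun S => h (embed S))) ->
  (forall h', C' h' -> C (fun S => h' (restrict S))) ->
  region_eq (proj_region C') (proj_del e (proj_region C)).
Proof.
move=> C'0 CC' C'C H Rt'; split.
  case=> h' [C'h' [L4h' Hh']]; exists (extend_rates Rt'); split; last first.
    by split; [exact: extend_rates_e | move=> x'; rewrite extend_rates_val].
  exists (fun S => h' (restrict S)); split; first exact: C'C.
  by split=> [|k]; [apply: L4_restrict (C'0 _ C'h') L4h' | rewrite Hh' restrict_set1_inl].
case=> Rt [[h [Ch [L4h Hh]]] [Rte Rt'E]].
have he : h [set inr e] = 0.
  by case: L4h => hnn [_ /(_ e)]; rewrite Rte; have := hnn [set inr e]; lra.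
exists (fun S => h (embed S)); split; first exact: CC'.
split=> [|k].
  by rewrite (functional_extensionality _ _ Rt'E); apply: L4_embed.
by rewrite Hh -(restrict_set1_inl e k) embed_restrict_set_id // inE.
Qed.

Lemma rate_region_del : region_eq (rate_region A') (proj_del e (rate_region A)).
Proof.
apply: proj_region_del.
- by move=> h' [/closure_cone_entropic_polymatroid []].
- move=> h [hcl L5h] he.
  split; last exact/L5_embed/L5h/he/closure_cone_entropic_polymatroid/hcl.
  apply: closure_comp hcl => g; apply: cone_comp => g' [Eg' [L1g' L2g']].
  by split; [exact: entropic_setmap | split; [exact: L1_embed | exact: L2_embed]].
- move=> h' [hcl L5h'].
  split; last exact/L5_restrict/L5h'/closure_cone_entropic_polymatroid/hcl.
  apply: closure_comp hcl => g; apply: cone_comp => g' [Eg' [L1g' L2g']].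
  by split; [exact: entropic_setmap | split; [exact: L1_restrict | exact: L2_restrict]].
Qed.

Lemma linear_region_del (G : forall V : finType, svec V -> Prop) :
  (forall (V : finType) (g : svec V), G V g -> polymatroid g) ->
  (forall (W V : finType) (o : W -> option V) (g : svec V),
     G V g -> G W (fun S => g (setmap o S))) ->
  region_eq (proj_region (fun h => cone (G _) h /\ L125 h))
            (proj_del e (proj_region (fun h => cone (G _) h /\ L125 h))).
Proof.
move=> GP Gsetmap; have coneP (V : finType) (h : svec V) : cone (G V) h -> polymatroid h.
  by move=> hc; apply: cone_polymatroid hc; apply: GP.
apply: proj_region_del.
- by move=> h' [/coneP []].
- move=> h [hc [L1h [L2h L5h]]] he; split; first by apply: cone_comp hc => g; apply: Gsetmap.
  split; [exact: L1_embed | split; [exact: L2_embed |]].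
  exact: L5_embed (coneP _ _ hc) he L5h.
- move=> h' [hc [L1h [L2h L5h]]]; split; first by apply: cone_comp hc => g; apply: Gsetmap.
  split; [exact: L1_restrict | split; [exact: L2_restrict |]].
  exact: L5_restrict (coneP _ _ hc) L5h.
Qed.

End RegionDeletion.

Section SuperpositionDeletion.
Variables (A : mdcs) (e : Enc A).
Hypothesis wfA : mdcs_wf A.
Local Notation A' := (del_enc e).

Lemma rsum_del_enc (P : pred (Enc A)) (f : Enc A -> R) : f e = 0 ->
  rsum P f = rsum (fun x' : Enc A' => P (val x')) (fun x' => f (val x')).
Proof.
move=> fe; rewrite (rsum_mkcond (fun x' : Enc A' => _)).
rewrite (partition_rsum (fun x' : Enc A' => val x')) (rsum_mkcond P).
apply: eq_rsumr => x _; case: (eqVneq x e) => [->|xe].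
  rewrite (eq_rsumr (g := fun _ => 0)) ?rsum0; first by case: (P e); rewrite ?fe.
  by move=> x' /eqP x'e; move: (val_del_neq x'); rewrite x'e eqxx.
by rewrite (eq_rsuml (Q := fun x' => x' == (Sub x xe : Enc A'))) ?rsum_pred1.
Qed.

Lemma sp_region_extend H Rt' :
  rate_region_sp A' H Rt' -> rate_region_sp A H (extend_rates Rt').
Proof.
case=> r' [Rt_ge0 [H_ge0 [r_ge0 [Rt_sum dec_sum]]]].
exists (fun x k => extend_rates (r'^~ k) x); split; [|split; [|split; [|split]]].
- by move=> x; apply: extend_rates_ge0.
- exact: H_ge0.
- by move=> x k; apply: extend_rates_ge0 => x'; apply: r_ge0.
- by move=> x; rewrite /extend_rates; case: insub => [x'|]; [apply: Rt_sum | rewrite rsum0].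
move=> d k lt_kd; apply: Rle_ge.
rewrite (rsum_del_enc (fun x => x \in fanD d) (f := fun x => extend_rates (r'^~ k) x));
  last exact: extend_rates_e.
have [d' [le_dd' fan_d']] := dec_del_dominated e wfA d.
apply: Rle_trans (Rge_le _ _ (dec_sum d' k (leq_trans lt_kd le_dd'))) _.
rewrite (eq_rsumr (g := r'^~ k)) => [|x' _]; last exact: extend_rates_val.
exact: ler_rsum_subpred.
Qed.

Lemma sp_region_restrict H Rt :
  rate_region_sp A H Rt -> Rt e = 0 -> rate_region_sp A' H (fun x' => Rt (val x')).
Proof.
case=> r [Rt_ge0 [H_ge0 [r_ge0 [Rt_sum dec_sum]]]] Rte.
have re k : r e k = 0 by apply: (rsum_eq0 (P := predT) (r_ge0 e)); rewrite -?Rt_sum.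
exists (fun x' k => r (val x') k); split; last split; last split; last split.
- by move=> x'; apply: Rt_ge0.
- exact: H_ge0.
- by move=> x' k; apply: r_ge0.
- by move=> x'; apply: Rt_sum.
move=> d' k lt_kd; have := dec_sum (val d') k lt_kd.
rewrite (rsum_del_enc _ (re k)) (eq_rsuml (Q := mem (fanD d'))) // => x'.
by rewrite !inE.
Qed.

Lemma sp_region_del : region_eq (rate_region_sp A') (proj_del e (rate_region_sp A)).
Proof.
move=> H Rt'; split=> [sp'|[Rt [sp [Rte Rt'E]]]].
  exists (extend_rates Rt'); split; first exact: sp_region_extend.
  by split; [exact: extend_rates_e | move=> x'; rewrite extend_rates_val].
by rewrite (functional_extensionality _ _ Rt'E); apply: sp_region_restrict.
Qed.

End SuperpositionDeletion.

Theorem theorem6 (F : finFieldType) (A : mdcs) (e : Enc A) :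
  mdcs_wf A ->
  region_eq (rate_region (del_enc e)) (proj_del e (rate_region A)) /\
  region_eq (rate_region_q F (del_enc e)) (proj_del e (rate_region_q F A)) /\
  region_eq (rate_region_sq F (del_enc e)) (proj_del e (rate_region_sq F A)) /\
  region_eq (rate_region_sp (del_enc e)) (proj_del e (rate_region_sp A)).
Proof.
move=> wfA; split; [exact: rate_region_del | split; [|split; last exact: sp_region_del]].
- apply: (linear_region_del wfA (G := @subspace_rank_vec F)).
    exact: subspace_rank_polymatroid.
  by move=> W V o g; apply: subspace_rank_setmap.
- apply: (linear_region_del wfA (G := @scalar_rank_vec F)).
    by move=> V g /scalar_rank_subspace_rank /subspace_rank_polymatroid.
  by move=> W V o g; apply: scalar_rank_setmap.
Qed.
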